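(* Let $\mathbf K$ be a commutative field, $p\ge1$, and let $T_1,\dots,T_d\in\mathrm{Rec}_{p\times p}(\mathbf K)$ be linearly independent elements spanning a recursively closed subspace, with shift matrices $\rho(s,t)\in\mathbf K^{d\times d}$ ($0\le s,t<p$) defined by $\rho(s,t)T_k=\sum_{j=1}^d\rho(s,t)_{j,k}T_j$. Then all of $T_1,\dots,T_d$ are of Toeplitz type if and only if the following two conditions hold: (1) $\rho(s,t)$ depends only on $s-t$ for $0\le s,t<p$; (2) writing $\rho(s-t)$ for $\rho(s,t)$ (so $\rho(m)$ is defined for $1-p\le m\le p-1$), one has $\rho(s+p)\rho(t)=\rho(s)\rho(t+1)$ for all $1-p\le s<0$ and $1-p\le t<p-1$.
   Context: $\mathcal M_{p\times p}^l$ is the set of pairs $(U,W)$ of words of length $l$ over $\{0,\dots,p-1\}$ and $\mathcal M_{p\times p}=\bigcup_l\mathcal M_{p\times p}^l$. Functions $A:\mathcal M_{p\times p}\to\mathbf K$ have values $A[U,W]$; shift maps act by $(\rho(S,T)A)[U,W]=A[US,WT]$; a subspace is recursively closed if invariant under all shift maps; $\mathrm{Rec}_{p\times p}(\mathbf K)$ is the set of $A$ whose span of $\{\rho(S,T)A\}$ is finite-dimensional. Words $u_1\dots u_l$ are identified with integers $\sum_j u_jp^{j-1}\in\{0,\dots,p^l-1\}$, so $A[\mathcal M_{p\times p}^l]$ is a $p^l\times p^l$ matrix; $A$ is of Toeplitz type if each such matrix is Toeplitz (entry $(u,w)$ depends only on $u-w$). Products of shift matrices are ordinary matrix products. *)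

From mathcomp Require Import all_boot all_order all_algebra.
Set Implicit Arguments. Unset Strict Implicit. Unset Printing Implicit Defensive.
Import Order.TTheory GRing.Theory Num.Theory.
Local Open Scope ring_scope.

(* Functions A : M_{pxp} -> K.  A pair (U,W) of words of length l over
   {0,..,p-1} is a pair of l-tuples of 'I_p; A l U W stands for A[U,W].
   The first letter of a tuple is u_1. *)
Definition Mfun (K : Type) (p : nat) :=
  forall l : nat, l.-tuple 'I_p -> l.-tuple 'I_p -> K.

Definition shiftw (K : Type) (p m : nat) (S T : m.-tuple 'I_p)
  (A : Mfun K p) : Mfun K p :=
  fun l U W => A (l + m)%N [tuple of U ++ S] [tuple of W ++ T].
Arguments shiftw {K p m} S T A : rename.

Definition shift1 (K : Type) (p : nat) (s t : 'I_p) (A : Mfun K p) : Mfun K p :=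
  fun l U W => A l.+1 [tuple of rcons U s] [tuple of rcons W t].
Arguments shift1 {K p} s t A : rename.

(* A in Rec_{pxp}(K): the span of all rho(S,T) A is finite-dimensional,
   i.e. contained in the span of finitely many functions B_0..B_{n-1}. *)
Definition isRec (K : fieldType) (p : nat) (A : Mfun K p) : Prop :=
  exists (n : nat) (B : 'I_n -> Mfun K p),
    forall (m : nat) (S T : m.-tuple 'I_p), exists c : 'I_n -> K,
      forall l U W, shiftw S T A l U W = \sum_(i < n) c i * B i l U W.

Definition wordnum (p l : nat) (U : l.-tuple 'I_p) : nat :=
  (\sum_(j < l) (tnth U j : nat) * p ^ j)%N.

(* Toeplitz type: each matrix A[M^l] is Toeplitz *)
Definition toeplitz_type (K : Type) (p : nat) (A : Mfun K p) : Prop :=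
  forall l (U W U' W' : l.-tuple 'I_p),
    (wordnum U)%:Z - (wordnum W)%:Z = (wordnum U')%:Z - (wordnum W')%:Z ->
    A l U W = A l U' W'.

Definition lin_indep (K : fieldType) (p d : nat) (T : 'I_d -> Mfun K p) : Prop :=
  forall c : 'I_d -> K,
    (forall l U W, \sum_(k < d) c k * T k l U W = 0) -> forall k, c k = 0.

(* rho(m) := rho(s,t) for some (s,t) with s - t = m (well defined when
   rho(s,t) depends only on s - t); 0 if there is none. *)
Definition rhoD (K : fieldType) (p d : nat) (rho : 'I_p -> 'I_p -> 'M[K]_d)
  (m : int) : 'M[K]_d :=
  match [pick st : 'I_p * 'I_p | (st.1 : nat)%:Z - (st.2 : nat)%:Z == m] with
  | Some st => rho st.1 st.2
  | None => 0
  end.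

From mathcomp Require Import all_boot all_order all_algebra zify ring.
Set Implicit Arguments. Unset Strict Implicit. Unset Printing Implicit Defensive.
Import Order.TTheory GRing.Theory Num.Theory.
Local Open Scope ring_scope.

(* Shifting by a pair of words (S, S') acts on the span of the T_k by the
   product of the one-letter shift matrices along the word.  If the T_k are of
   Toeplitz type, this product depends only on wordnum S - wordnum S' (by
   linear independence), and words of length one and two give conditions (1)
   and (2).  Conversely, under (1), T_k[U,W] is read off from the product
   rho(u_1 - w_1) ... rho(u_l - w_l), a product along a word of signed base-p
   digits in {1-p, ..., p-1} whose value is wordnum U - wordnum W.  Condition
   (2) is the carry rule rho(s+p) rho(t) = rho(s) rho(t+1), and any two digit
   words of the same length and value have the same product: by induction on
   the length, together with rho(s+p) P(x) = rho(s) P(y) whenever the value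
   of y exceeds that of x by one. *)

Section SignedDigits.
Variable p : nat.

(* Digit words are read least significant digit first, as in [wordnum]. *)
Definition digval (x : seq int) : int := foldr (fun a v => a + p%:Z * v) 0 x.

Definition sdigit (a : int) : bool := 1 - p%:Z <= a <= p%:Z - 1.

Definition sdword (l : nat) (x : seq int) : bool := (size x == l) && all sdigit x.

Lemma digval_cat x y : digval (x ++ y) = digval x + p%:Z ^+ size x * digval y.
Proof.
elim: x => [|a x IH] /=; first by rewrite expr0 mul1r add0r.
by rewrite IH exprS mulrDr addrA mulrA.
Qed.

Lemma sdword_cons l a x : sdword l.+1 (a :: x) = sdigit a && sdword l x.
Proof. by rewrite /sdword /= eqSS andbCA. Qed.

Lemma sdigit_carry a b v w : sdigit a -> sdigit b ->
  a + p%:Z * v = b + p%:Z * w ->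
  [\/ a = b /\ v = w, a = b + p%:Z /\ w = v + 1 | b = a + p%:Z /\ v = w + 1].
Proof.
rewrite /sdigit => /andP[a_ge a_le] /andP[b_ge b_le] e.
have : w = v - 1 \/ w = v \/ w = v + 1 by nia.
case=> [|[|]] ew; subst w.
- by constructor 3; split; [nia | lia].
- by constructor 1; split; [nia | lia].
- by constructor 2; split; [nia | lia].
Qed.
End SignedDigits.

Section CarryRelation.
Variables (A : pzSemiRingType) (p : nat) (R : int -> A).
Hypothesis R_carry : forall s t : int,
  1 - p%:Z <= s < 0 -> 1 - p%:Z <= t < p%:Z - 1 ->
  R (s + p%:Z) * R t = R s * R (t + 1).

Local Notation prodR x := (\prod_(a <- x) R a).

Definition prodR_digval_at (l : nat) : Prop :=
  forall x y, sdword p l x -> sdword p l y -> digval p x = digval p y ->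
  prodR x = prodR y.

Definition prodR_carry_at (l : nat) : Prop :=
  forall s x y, 1 - p%:Z <= s < 0 -> sdword p l x -> sdword p l y ->
  digval p y = digval p x + 1 -> R (s + p%:Z) * prodR x = R s * prodR y.

Lemma prodR_digval_succ l :
  prodR_digval_at l -> prodR_carry_at l -> prodR_digval_at l.+1.
Proof.
move=> eq_l carry_l [|a x] [|b y] //; rewrite !sdword_cons.
move=> /andP[a_dig x_dig] /andP[b_dig y_dig] /= e; rewrite !big_cons.
have [[-> exy]|[-> eyx]|[-> exy]] := sdigit_carry a_dig b_dig e.
- by rewrite (eq_l x y).
- by rewrite (carry_l b x y) //; rewrite /sdigit in a_dig b_dig; lia.
- by rewrite (carry_l a y x) //; rewrite /sdigit in a_dig b_dig; lia.
Qed.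

Lemma prodR_carry_succ l :
  prodR_digval_at l -> prodR_carry_at l -> prodR_carry_at l.+1.
Proof.
move=> eq_l carry_l s [|t x] [|u y] // s_neg; rewrite !sdword_cons.
move=> /andP[t_dig x_dig] /andP[u_dig y_dig] /= e; rewrite !big_cons !mulrA.
have [t_top|t_low] : t = p%:Z - 1 \/ t < p%:Z - 1 by rewrite /sdigit in t_dig; lia.
- have e' : u + p%:Z * digval p y = 0 + p%:Z * (digval p x + 1) by nia.
  have zero_dig : sdigit p 0 by rewrite /sdigit; lia.
  have [[-> eyx]|[]|[]] := sdigit_carry u_dig zero_dig e';
    rewrite /sdigit in u_dig; try lia.
  rewrite t_top [p%:Z - 1]addrC -mulrA (carry_l (-1) x y) //; last lia.
  by rewrite mulrA R_carry ?addNr //; lia.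
- have t1_dig : sdigit p (t + 1) by rewrite /sdigit in t_dig *; lia.
  have e' : u + p%:Z * digval p y = (t + 1) + p%:Z * digval p x by lia.
  have t_range : 1 - p%:Z <= t < p%:Z - 1 by rewrite /sdigit in t_dig; lia.
  have [[-> eyx]|[-> exy]|[et eyx]] := sdigit_carry u_dig t1_dig e'.
  + by rewrite (eq_l x y) // R_carry.
  + rewrite -!mulrA (carry_l (t + 1) y x) ?mulrA ?R_carry //.
    by rewrite /sdigit in u_dig; lia.
  + rewrite -!mulrA -(carry_l u x y) ?mulrA -?et ?R_carry //.
    by rewrite /sdigit in u_dig; lia.
Qed.

Lemma prodR_digval l x y : sdword p l x -> sdword p l y ->
  digval p x = digval p y -> prodR x = prodR y.
Proof.
have [eq_l _] : prodR_digval_at l /\ prodR_carry_at l; last exact: eq_l.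
elim: l => [|l [eq_l carry_l]]; last first.
  by split; [apply: prodR_digval_succ | apply: prodR_carry_succ].
by split=> [|s] [|? ?] [|? ?] //= _ _ _; lia.
Qed.
End CarryRelation.

Section Words.
Variable p : nat.

Definition word_digits l (U : l.-tuple 'I_p) : seq int :=
  [seq (nat_of_ord u)%:Z | u <- U].

Definition digit_diff l (U W : l.-tuple 'I_p) : seq int :=
  [seq (nat_of_ord uw.1)%:Z - (nat_of_ord uw.2)%:Z | uw <- zip U W].

Lemma wordnum_cons l (u : 'I_p) (U : l.-tuple 'I_p) :
  wordnum [tuple of u :: U] = (u + p * wordnum U)%N.
Proof.
rewrite /wordnum big_ord_recl tnth0 muln1 big_distrr /=; congr (_ + _)%N.
by apply: eq_bigr => j _; rewrite tnthS expnS mulnCA.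
Qed.

Lemma wordnumE l (U : l.-tuple 'I_p) : (wordnum U)%:Z = digval p (word_digits U).
Proof.
elim: l U => [|l IH] U; first by rewrite tuple0 /wordnum big_ord0.
by case: U / tupleP => u U; rewrite wordnum_cons PoszD PoszM IH.
Qed.

Lemma wordnum_cat l m (U : l.-tuple 'I_p) (S : m.-tuple 'I_p) :
  (wordnum [tuple of U ++ S])%:Z = (wordnum U)%:Z + p%:Z ^+ l * (wordnum S)%:Z.
Proof. by rewrite !wordnumE /word_digits map_cat digval_cat size_map size_tuple. Qed.

Lemma digval_digit_diff l (U W : l.-tuple 'I_p) :
  digval p (digit_diff U W) = (wordnum U)%:Z - (wordnum W)%:Z.
Proof.
elim: l U W => [|l IH] U W.
  by rewrite (tuple0 U) (tuple0 W) /wordnum !big_ord0 subrr.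
case: U / tupleP => u U; case: W / tupleP => w W.
rewrite !wordnum_cons /= IH !PoszD !PoszM; ring.
Qed.

Lemma sdword_digit_diff l (U W : l.-tuple 'I_p) : sdword p l (digit_diff U W).
Proof.
rewrite /sdword size_map size_zip !size_tuple minnn eqxx /=.
apply/allP => _ /mapP[[u w] _ ->]; rewrite /sdigit /=.
by have := ltn_ord u; have := ltn_ord w; lia.
Qed.

End Words.

Lemma Mfun_congr (K : Type) (p : nat) (A : Mfun K p) l l'
    (U W : l.-tuple 'I_p) (U' W' : l'.-tuple 'I_p) :
  val U = val U' -> val W = val W' -> A l U W = A l' U' W'.
Proof.
move=> eU eW; have ell' : l = l' by rewrite -(size_tuple U) -(size_tuple U') eU.
by subst l'; congr (A l _ _); apply: val_inj.
Qed.

Section DifferenceShifts.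
Variables (K : fieldType) (p d : nat) (rho : 'I_p -> 'I_p -> 'M[K]_d).

Definition diff_invariant : Prop :=
  forall s t s' t' : 'I_p,
  (s : nat)%:Z - (t : nat)%:Z = (s' : nat)%:Z - (t' : nat)%:Z -> rho s t = rho s' t'.

Lemma sdigit_ord_diff (s t : 'I_p) : sdigit p ((s : nat)%:Z - (t : nat)%:Z).
Proof. by rewrite /sdigit; have := ltn_ord s; have := ltn_ord t; lia. Qed.

Lemma rhoD_spec m : sdigit p m ->
  exists s t : 'I_p, (s : nat)%:Z - (t : nat)%:Z = m /\ rhoD rho m = rho s t.
Proof.
rewrite /rhoD => m_dig; case: pickP => [[s t] /eqP st_m|no_pair]; first by exists s, t.
exfalso; rewrite /sdigit in m_dig.
have p_gt0 : (0 < p)%N by lia.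
case: m m_dig no_pair => n n_dig no_pair.
  have n_lt : (n < p)%N by lia.
  by have := no_pair (Ordinal n_lt, Ordinal p_gt0); rewrite /= subr0 eqxx.
have n_lt : (n.+1 < p)%N by move: n_dig; rewrite NegzE; lia.
by have := no_pair (Ordinal p_gt0, Ordinal n_lt); rewrite /= NegzE sub0r eqxx.
Qed.

Lemma rhoD_ord_diff : diff_invariant ->
  forall s t : 'I_p, rhoD rho ((s : nat)%:Z - (t : nat)%:Z) = rho s t.
Proof.
move=> rho_diff s t; have [s' [t' [e ->]]] := rhoD_spec (sdigit_ord_diff s t).
exact: rho_diff.
Qed.

End DifferenceShifts.

Section ShiftMatrices.
Variables (K : fieldType) (p d : nat) (T : 'I_d -> Mfun K p).
(* [Mfun K p] unfolds to a product, which would make [l] implicit in [T]. *)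
Arguments T : clear implicits.

Lemma lin_indep_mx_eq : lin_indep T -> forall M N : 'M[K]_d,
  (forall k l (U W : l.-tuple 'I_p),
     \sum_j M j k * T j l U W = \sum_j N j k * T j l U W) ->
  M = N.
Proof.
move=> T_indep M N MN; apply/matrixP => i k; apply/eqP; rewrite -subr_eq0; apply/eqP.
apply: (T_indep (fun j => M j k - N j k)) => l U W.
under eq_bigr do rewrite mulrBl.
by rewrite sumrB MN subrr.
Qed.

Variable rho : 'I_p -> 'I_p -> 'M[K]_d.
Hypothesis rhoP : forall (s t : 'I_p) k l U W,
  shift1 s t (T k) l U W = \sum_j rho s t j k * T j l U W.

Definition rhoword m (S S' : m.-tuple 'I_p) : 'M[K]_d :=
  \prod_(st <- zip S S') rho st.1 st.2.

Lemma shiftw_rhoword m (S S' : m.-tuple 'I_p) k l (U W : l.-tuple 'I_p) :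
  shiftw S S' (T k) l U W = \sum_j rhoword S S' j k * T j l U W.
Proof.
elim: m S S' k l U W => [|m IH] S S' k l U W.
  rewrite (tuple0 S) (tuple0 S') /rhoword big_nil (bigD1 k) //= big1 => [|j /negbTE jk].
    by rewrite mxE (eqxx k) mul1r addr0; apply: (Mfun_congr (T k)); rewrite /= cats0.
  by rewrite mxE jk mul0r.
case: S / tupleP => s S; case: S' / tupleP => s' S'.
have -> : shiftw [tuple of s :: S] [tuple of s' :: S'] (T k) l U W
        = shiftw S S' (T k) l.+1 [tuple of rcons U s] [tuple of rcons W s'].
  by apply: (Mfun_congr (T k)); rewrite /= cat_rcons.
rewrite IH; under eq_bigr do rewrite -/(shift1 s s' (T _) l U W) rhoP big_distrr.
rewrite exchange_big /rhoword /= big_cons; apply: eq_bigr => i _.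
rewrite -mulmxE mxE big_distrl; apply: eq_bigr => j _ /=.
by rewrite mulrCA mulrA.
Qed.

Lemma T_rhoword k l (U W : l.-tuple 'I_p) :
  T k l U W = \sum_j rhoword U W j k * T j 0 [tuple] [tuple].
Proof. by rewrite -shiftw_rhoword; apply: (Mfun_congr (T k)). Qed.

Lemma toeplitz_rhoword : lin_indep T -> (forall k, toeplitz_type (T k)) ->
  forall m (S S' R R' : m.-tuple 'I_p),
  (wordnum S)%:Z - (wordnum S')%:Z = (wordnum R)%:Z - (wordnum R')%:Z ->
  rhoword S S' = rhoword R R'.
Proof.
move=> T_indep T_toep m S S' R R' eSR; apply: lin_indep_mx_eq => // k l U W.
rewrite -2!shiftw_rhoword; apply: T_toep.
by rewrite !wordnum_cat !opprD [LHS]addrACA [RHS]addrACA -!mulrBr eSR.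
Qed.

Lemma rhoword_rhoD : diff_invariant rho ->
  forall l (U W : l.-tuple 'I_p),
  rhoword U W = \prod_(a <- digit_diff U W) rhoD rho a.
Proof.
move=> rho_diff l U W; rewrite /rhoword /digit_diff big_map.
by apply: eq_bigr => -[s t] _; rewrite rhoD_ord_diff.
Qed.

Lemma toeplitz_diff_invariant : lin_indep T -> (forall k, toeplitz_type (T k)) ->
  diff_invariant rho.
Proof.
move=> T_indep T_toep s t s' t' e.
have := toeplitz_rhoword T_indep T_toep
  (S := [tuple s]) (S' := [tuple t]) (R := [tuple s']) (R' := [tuple t']).
rewrite /rhoword /= !big_seq1; apply.
by rewrite !wordnumE /=; lia.
Qed.

Lemma toeplitz_rhoD_carry : lin_indep T -> (forall k, toeplitz_type (T k)) ->
  forall s t : int,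
  1 - p%:Z <= s < 0 -> 1 - p%:Z <= t < p%:Z - 1 ->
  rhoD rho (s + p%:Z) *m rhoD rho t = rhoD rho s *m rhoD rho (t + 1).
Proof.
move=> T_indep T_toep s t s_range t_range.
have [a1 [b1 [e1 ->]]] := rhoD_spec rho (m := s + p%:Z) ltac:(rewrite /sdigit; lia).
have [a2 [b2 [e2 ->]]] := rhoD_spec rho (m := t) ltac:(rewrite /sdigit; lia).
have [a3 [b3 [e3 ->]]] := rhoD_spec rho (m := s) ltac:(rewrite /sdigit; lia).
have [a4 [b4 [e4 ->]]] := rhoD_spec rho (m := t + 1) ltac:(rewrite /sdigit; lia).
have := toeplitz_rhoword T_indep T_toep
  (S := [tuple a1; a2]) (S' := [tuple b1; b2])
  (R := [tuple a3; a4]) (R' := [tuple b3; b4]).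
rewrite /rhoword /= !big_cons !big_nil !mulr1 mulmxE; apply.
by rewrite !wordnumE /=; nia.
Qed.

Lemma toeplitz_of_rhoD_carry : diff_invariant rho ->
  (forall s t : int,
    1 - p%:Z <= s < 0 -> 1 - p%:Z <= t < p%:Z - 1 ->
    rhoD rho (s + p%:Z) *m rhoD rho t = rhoD rho s *m rhoD rho (t + 1)) ->
  forall k, toeplitz_type (T k).
Proof.
move=> rho_diff rho_carry k l U W U' W' e.
rewrite !T_rhoword !rhoword_rhoD //.
rewrite (prodR_digval rho_carry (sdword_digit_diff U W) (sdword_digit_diff U' W')) //.
by rewrite !digval_digit_diff.
Qed.

End ShiftMatrices.

Theorem mainTheorem11 (K : fieldType) (p d : nat) (hp : (0 < p)%N)
  (T : 'I_d -> Mfun K p)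
  (hrec : forall k, isRec (T k))
  (hind : lin_indep T)
  (rho : 'I_p -> 'I_p -> 'M[K]_d)
  (hrho : forall (s t : 'I_p) (k : 'I_d) l U W,
      shift1 s t (T k) l U W = \sum_(j < d) rho s t j k * T j l U W) :
  (forall k, toeplitz_type (T k)) <->
  ((forall s t s' t' : 'I_p,
      (s : nat)%:Z - (t : nat)%:Z = (s' : nat)%:Z - (t' : nat)%:Z ->
      rho s t = rho s' t') /\
   (forall s t : int,
      1 - (p : nat)%:Z <= s < 0 -> 1 - (p : nat)%:Z <= t < (p : nat)%:Z - 1 ->
      rhoD rho (s + (p : nat)%:Z) *m rhoD rho t = rhoD rho s *m rhoD rho (t + 1))).
Proof.
split=> [T_toep | [rho_diff rho_carry]].
  split; [exact: toeplitz_diff_invariant | exact: toeplitz_rhoD_carry].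
exact: toeplitz_of_rhoD_carry.
Qed.
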